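(* Let $\mathcal{G}=(\mathcal{V},\mathcal{E},\mathbf{W})$ be a weighted undirected graph with node set $\mathcal{V}=\{1,\dots,N\}$ and symmetric nonnegative weights $W_{i,j}$, equipped with an arbitrary fixed orientation. Let $\mathcal{F}=\{\mathcal{C}_1,\dots,\mathcal{C}_{|\mathcal{F}|}\}$ be a partition of $\mathcal{V}$ into pairwise disjoint clusters, let $x:\mathcal{V}\to\mathbb{R}$ be any graph signal, and let $\mathcal{M}\subseteq\mathcal{V}$ be a sampling set satisfying NNSP-$\mathcal{F}$ with $\kappa=2$. Then every solution $\hat{x}$ of $$\min_{\tilde{x}:\mathcal{V}\to\mathbb{R}} \|\tilde{x}\|_{\rm TV}\quad\text{subject to}\quad \tilde{x}[i]=x[i]\ \text{for all } i\in\mathcal{M}$$ satisfies $$\|\hat{x}-x\|_{\rm TV}\le 6\min_{\mathbf{a}\in\mathbb{R}^{|\mathcal{F}|}}\Big\|x-\sum_{\mathcal{C}\in\mathcal{F}} a_{\mathcal{C}}\mathcal{I}_{\mathcal{C}}\Big\|_{\rm TV}.$$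
   Context: $\mathcal{I}_{\mathcal{C}}[i]=1$ if $i\in\mathcal{C}$ and $0$ otherwise. For a graph signal $x:\mathcal{V}\to\mathbb{R}$ the total variation is $\|x\|_{\rm TV}=\sum_{\{i,j\}\in\mathcal{E}} W_{i,j}|x[i]-x[j]|$. The orientation declares for each edge $e=\{i,j\}$ one endpoint the head $e^{+}$ and the other the tail $e^{-}$; $\mathcal{N}^{+}(i)$ is the set of neighbours $j$ of $i$ such that $i$ is the head of $\{i,j\}$, and $\mathcal{N}^{-}(i)$ the set of neighbours $j$ such that $i$ is the tail. The boundary of the partition is $\partial\mathcal{F}=\{\{i,j\}\in\mathcal{E}: i\in\mathcal{C}_l, j\in\mathcal{C}_{l'}, l\neq l'\}$. A flow with demands $g:\mathcal{V}\to\mathbb{R}$ is a map $f:\mathcal{E}\to\mathbb{R}$ with $\sum_{j\in\mathcal{N}^{+}(i)} f[\{i,j\}]-\sum_{j\in\mathcal{N}^{-}(i)} f[\{i,j\}]=g[i]$ for every $i\in\mathcal{V}$. ''$\mathcal{M}$ satisfies NNSP-$\mathcal{F}$ with $\kappa=2$'' means: for every signature $\sigma\in\{-1,1\}^{\partial\mathcal{F}}$ there is a flow $f$ whose demands satisfy $g[i]=0$ for all $i\notin\mathcal{M}$, with $f[e]=2\sigma_e W_e$ for every $e\in\partial\mathcal{F}$ and $|f[e]|\le W_e$ for every $e\in\mathcal{E}\setminus\partial\mathcal{F}$. *)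

From mathcomp Require Import all_boot all_order all_algebra.
Set Implicit Arguments. Unset Strict Implicit. Unset Printing Implicit Defensive.
Import Order.TTheory GRing.Theory Num.Theory.
Local Open Scope ring_scope.

(* An oriented weighted graph on a finite node set V:
   E i j  means {i,j} is an edge whose head is i and tail is j
   (each undirected edge appears in exactly one orientation). *)

Section Graph.
Variables (R : realFieldType) (V : finType).
Variables (E : rel V) (W : V -> V -> R).

Definition oriented := forall i j : V, E i j -> ~~ E j i.

Definition TV (x : V -> R) : R :=
  \sum_(p : V * V | E p.1 p.2) W p.1 p.2 * `|x p.1 - x p.2|.

Definition indic (C : {set V}) : V -> R := fun i => (i \in C)%:R.

Definition boundary (P : {set {set V}}) (i j : V) : bool :=
  E i j && (pblock P i != pblock P j).

Definition demand (f : V -> V -> R) (i : V) : R :=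
  \sum_(j | E i j) f i j - \sum_(j | E j i) f j i.

Definition NNSP2 (P : {set {set V}}) (M : {set V}) : Prop :=
  forall sigma : V -> V -> bool,
  exists f : V -> V -> R,
    (forall i, i \notin M -> demand f i = 0) /\
    (forall i j, boundary P i j ->
        f i j = 2 * (if sigma i j then 1 else -1) * W i j) /\
    (forall i j, E i j -> ~~ boundary P i j -> `|f i j| <= W i j).

Definition TV_min_solution (M : {set V}) (x xhat : V -> R) : Prop :=
  (forall i, i \in M -> xhat i = x i) /\
  (forall y : V -> R, (forall i, i \in M -> y i = x i) -> TV xhat <= TV y).

End Graph.

From mathcomp Require Import all_boot all_order all_algebra.
From mathcomp Require Import ring lra.
Set Implicit Arguments. Unset Strict Implicit. Unset Printing Implicit Defensive.
Import Order.TTheory GRing.Theory Num.Theory.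
Local Open Scope ring_scope.

(* Write u = xhat - x and z = x - sum_C a_C I_C, and split every total
   variation into its part over the boundary edges of the partition and its
   part over the interior edges.  Pairing u, which vanishes on M, with the
   NNSP flow whose boundary signs are those of u gives
   2 TV_bd(u) <= TV_in(u).  Comparing xhat with the feasible signal x, and
   using that x and z vary identically along interior edges, gives
   TV_in(u) <= TV_bd(u) + 2 TV_in(z).  Hence TV_bd(u) <= 2 TV_in(z) and
   TV_in(u) <= 4 TV_in(z), so TV(u) <= 6 TV_in(z) <= 6 TV(z). *)

Section TotalVariation.
Variables (R : realFieldType) (V : finType) (E : rel V) (W : V -> V -> R).

Lemma sum_mul_demand (f : V -> V -> R) (u : V -> R) :
  \sum_i u i * demand E f i =
  \sum_(p : V * V | E p.1 p.2) f p.1 p.2 * (u p.1 - u p.2).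
Proof.
under eq_bigr => i _ do rewrite /demand mulrBr !mulr_sumr.
rewrite sumrB (exchange_big_dep xpredT) //= !pair_big_dep /=.
under [RHS]eq_bigr => p _ do rewrite mulrBr.
have swap_inj : injective (fun p : V * V => (p.2, p.1)).
  by move=> [? ?] [? ?] [-> ->].
rewrite sumrB; congr (_ - _); rewrite (reindex_inj swap_inj) /=;
  by apply: eq_bigr => p _; rewrite mulrC.
Qed.

Definition TV_on (D : rel V) (x : V -> R) : R :=
  \sum_(p : V * V | D p.1 p.2) W p.1 p.2 * `|x p.1 - x p.2|.

Lemma TV_on_ge0 (D : rel V) (x : V -> R) :
  (forall i j, 0 <= W i j) -> 0 <= TV_on D x.
Proof. by move=> W_ge0; apply: sumr_ge0 => p _; rewrite mulr_ge0. Qed.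

Lemma eq_TV_on (D : rel V) (x y : V -> R) :
  (forall i j, D i j -> x i - x j = y i - y j) -> TV_on D x = TV_on D y.
Proof. by move=> exy; apply: eq_bigr => p /exy ->. Qed.

Lemma TV_on_le_sub (D : rel V) (x y z : V -> R) :
  (forall i j, 0 <= W i j) -> (forall i, x i = y i - z i) ->
  TV_on D x <= TV_on D y + TV_on D z.
Proof.
move=> W_ge0 exyz; rewrite -big_split /=; apply: ler_sum => p _.
rewrite -mulrDr ler_wpM2l // !exyz.
have -> : y p.1 - z p.1 - (y p.2 - z p.2) = (y p.1 - y p.2) - (z p.1 - z p.2).
  by ring.
exact: ler_normB.
Qed.

Variable P : {set {set V}}.

Definition interior (i j : V) : bool := E i j && ~~ boundary E P i j.

Lemma TV_split (x : V -> R) :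
  TV E W x = TV_on (boundary E P) x + TV_on interior x.
Proof.
rewrite /TV (bigID (fun p : V * V => boundary E P p.1 p.2)) /=; congr (_ + _).
by apply: eq_bigl => p; rewrite /boundary; case: (E _ _).
Qed.

Lemma nnsp2_boundary_le (M : {set V}) (u : V -> R) :
  NNSP2 E W P M -> (forall i, i \in M -> u i = 0) ->
  2 * TV_on (boundary E P) u <= TV_on interior u.
Proof.
move=> nnsp u0.
have [f [f_dem [f_bd f_in]]] := nnsp (fun i j => 0 <= u i - u j).
have pairing0 : \sum_i u i * demand E f i = 0.
  apply: big1 => i _; case: (boolP (i \in M)) => iM.
    by rewrite u0 // mul0r.
  by rewrite f_dem // mulr0.
rewrite sum_mul_demand (bigID (fun p : V * V => boundary E P p.1 p.2)) /=
  in pairing0.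
have pair_bd : \sum_(p : V * V | E p.1 p.2 && boundary E P p.1 p.2)
    f p.1 p.2 * (u p.1 - u p.2) = 2 * TV_on (boundary E P) u.
  rewrite /TV_on mulr_sumr; apply: eq_big => [p|p /andP[_ bp]].
    by rewrite /boundary; case: (E _ _).
  rewrite f_bd //; case: ifP => [u_ge0|/negbT].
    by rewrite ger0_norm //; ring.
  by rewrite -ltNge => u_lt0; rewrite ltr0_norm //; ring.
have pair_in : - \sum_(p : V * V | E p.1 p.2 && ~~ boundary E P p.1 p.2)
    f p.1 p.2 * (u p.1 - u p.2) <= TV_on interior u.
  rewrite -sumrN; apply: ler_sum => p /andP[ep nbp].
  rewrite (le_trans (ler_norm _)) // normrN normrM ler_wpM2r //.
  exact: f_in.
lra.
Qed.

Lemma pwconst_interior (a : {set V} -> R) (i j : V) :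
  partition P [set: V] -> interior i j ->
  \sum_(C in P) a C * indic R C i = \sum_(C in P) a C * indic R C j.
Proof.
case/and3P=> /eqP coverP trivP _ /andP[ij].
rewrite /boundary ij negbK => /eqP ij_blk.
have memC C : C \in P -> forall k, (k \in C) = (pblock P k == C).
  move=> CP k; apply/idP/eqP => [kC|<-]; first exact: def_pblock trivP CP kC.
  by rewrite mem_pblock coverP inE.
by apply: eq_bigr => C CP; rewrite /indic !memC // ij_blk.
Qed.

Lemma TV_interior_sub_pwconst (a : {set V} -> R) (x : V -> R) :
  partition P [set: V] ->
  TV_on interior (fun i => x i - \sum_(C in P) a C * indic R C i) =
  TV_on interior x.
Proof.
move=> partP; apply: eq_TV_on => i j ij.
by rewrite (pwconst_interior a partP ij); ring.
Qed.

End TotalVariation.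

Theorem theorem2 (R : realFieldType) (V : finType) (E : rel V) (W : V -> V -> R)
  (hE : oriented E)
  (hWsym : forall i j, W i j = W j i) (hWpos : forall i j, 0 <= W i j)
  (P : {set {set V}}) (hP : partition P [set: V])
  (x : V -> R) (M : {set V}) (hM : NNSP2 E W P M)
  (xhat : V -> R) (hxhat : TV_min_solution E W M x xhat) :
  forall a : {set V} -> R,
    TV E W (fun i => xhat i - x i)
      <= 6 * TV E W (fun i => x i - \sum_(C in P) a C * indic R C i).
Proof.
move=> a; case: hxhat => xhat_M xhat_min.
set u := fun i => xhat i - x i.
set z := fun i => x i - \sum_(C in P) a C * indic R C i.
have u_M i : i \in M -> u i = 0 by move=> iM; rewrite /u xhat_M ?subrr.
have nsp := nnsp2_boundary_le hM u_M.
have TV_le := xhat_min x (fun _ _ => erefl).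
rewrite !(TV_split E W P) in TV_le.
have bd_le : TV_on W (boundary E P) x <= TV_on W (boundary E P) xhat
    + TV_on W (boundary E P) u.
  by apply: TV_on_le_sub => // i; rewrite /u; ring.
have in_le : TV_on W (interior E P) u <= TV_on W (interior E P) xhat
    + TV_on W (interior E P) x by exact: TV_on_le_sub.
have in_xz := TV_interior_sub_pwconst E W a x hP.
have bd_z_ge0 := TV_on_ge0 (boundary E P) z hWpos.
rewrite !(TV_split E W P) -/z in in_xz *; lra.
Qed.
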